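(* When the characteristic functions range over $V_{\ge3}$, the competitive ratio of any individually rational (non-wasteful, possibly non-irrevocable) distribution policy cannot exceed $\frac{3\mathsf{min}}{\mathsf{max}}$, whether players act as greedy players or as pessimistic greedy players.
   Context: Players: a finite set $N=\{a_1,\dots,a_n\}$. A characteristic function is $v:2^N\to\mathbb{R}_{\ge 0}$ with $v(\emptyset)=0$. There are fixed, known constants $0<\mathsf{min}\le\mathsf{max}$ and every $v$ considered is monotone and bounded: $\mathsf{min}\le v(S)\le v(T)\le\mathsf{max}$ for all nonempty $S\subseteq T\subseteq N$. For an integer $\delta\ge1$, $V_\delta$ is the set of such $v$ with $\delta\cdot\mathsf{min}\le\mathsf{max}<(\delta+1)\cdot\mathsf{min}$; $V_{\ge3}=\bigcup_{\delta\ge3}V_\delta$. A coalition structure is a partition $C$ of $N$; $\mathsf{SW}(C\mid v)=\sum_{S\in C}v(S)$. Online process: an arrival order is a permutation $\pi=(\pi_1,\dots,\pi_n)$ of $N$; player $\pi_t$ arrives at time $t$. For $S\subseteq N$, $\pi_{|S}$ denotes the players of $S$ in the relative order of $\pi$. Let $C^{t-1}$ be the coalition structure of players arrived before time $t$ ($C^0=\emptyset$). At time $t$, player $\pi_t$ either joins an existing coalition $S\in C^{t-1}$ or forms $\{\pi_t\}$ (choice $S=\emptyset$); decisions are never revised. A distribution policy $\varphi$ assigns to every coalition $S$ with order $\pi_{|S}$ a vector $(\varphi_i(S,\pi_{|S}))_{i\in S}$ with $\sum_{i\in S}\varphi_i=v(S)$. In general (non-irrevocable) policies each share is split as $\varphi_i=\bar\varphi_i+\tilde\varphi_i$,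 where $\bar\varphi_i$ is paid out irrevocably (never reduced later) and $\tilde\varphi_i$ is promised but held in a bank for the coalition and may be redistributed (increased or decreased) when new players join; if nobody joins, $\tilde\varphi_i$ is paid out. Greedy players: $\pi_t$ chooses $S\in C^{t-1}\cup\{\emptyset\}$ maximizing $\varphi_{\pi_t}(S\cup\{\pi_t\},\pi_{|S\cup\{\pi_t\}})$. Pessimistic greedy players instead maximize $\bar\varphi_{\pi_t}(S\cup\{\pi_t\},\pi_{|S\cup\{\pi_t\}})$. Ties are broken by a predetermined rule. $C_g^t$ denotes the structure after time $t$ and $C_g=C_g^n$. Individual rationality: for every $v$ (and $\pi$), every $t\le n$, every $S\in C_g^t$ and every $i\in S$, $\varphi_i(S)\ge v(\{i\})$. The competitive ratio over a class is $\alpha=\inf_{v,\pi}\mathsf{SW}(C_g(v,\pi\mid\varphi))/\max_C\mathsf{SW}(C\mid v)$, over $v$ in the class and all arrival orders $\pi$. *)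

From HB Require Import structures.
From mathcomp Require Import boolp classical_sets reals.
From mathcomp Require Import all_boot all_order all_algebra all_fingroup.

Set Implicit Arguments.
Unset Strict Implicit.
Unset Printing Implicit Defensive.

Import Order.TTheory GRing.Theory Num.Theory.
Local Open Scope ring_scope.

Section OnlineCoalitions.
Variable R : realType.

Definition game (n : nat) := {set 'I_n} -> R.

Definition bounded_monotone (mn mx : R) (n : nat) (v : game n) : Prop :=
  v set0 = 0 /\
  forall S T : {set 'I_n}, S != set0 -> S \subset T ->
    [/\ mn <= v S, v S <= v T & v T <= mx].

Definition in_V (d : nat) (mn mx : R) (n : nat) (v : game n) : Prop :=
  bounded_monotone mn mx v /\ d%:R * mn <= mx /\ mx < d.+1%:R * mn.

Definition in_V_ge3 (mn mx : R) (n : nat) (v : game n) : Prop :=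
  exists d : nat, (3 <= d)%N /\ in_V d mn mx v.

Definition arrival (n : nat) (pi : {perm 'I_n}) : seq 'I_n :=
  map pi (enum 'I_n).

Definition restr (n : nat) (pi : {perm 'I_n}) (S : {set 'I_n}) : seq 'I_n :=
  [seq x <- arrival pi | x \in S].

(* A general (possibly non-irrevocable) distribution policy: for every player
   set, characteristic function, coalition S and order pi_{|S}, the
   irrevocably paid part [pay] (bar phi) and the banked part [bank]
   (tilde phi) of each player's share. *)
Record policy := Policy {
  pay  : forall n : nat, game n -> {set 'I_n} -> seq 'I_n -> 'I_n -> R;
  bank : forall n : nat, game n -> {set 'I_n} -> seq 'I_n -> 'I_n -> R }.

Definition share (phi : policy) (n : nat) (v : game n) (S : {set 'I_n})
  (o : seq 'I_n) (i : 'I_n) : R :=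
  pay phi v S o i + bank phi v S o i.

Definition gclass := forall n : nat, game n -> Prop.

Definition V_ge3 (mn mx : R) : gclass := fun n v => in_V_ge3 mn mx v.

Definition non_wasteful (phi : policy) (K : gclass) : Prop :=
  forall n (v : game n) (pi : {perm 'I_n}) (S : {set 'I_n}),
    K n v -> S != set0 ->
    \sum_(i in S) share phi v S (restr pi S) i = v S.

Definition irrevocable_pay (phi : policy) (K : gclass) : Prop :=
  forall n (v : game n) (pi : {perm 'I_n}) (S : {set 'I_n}) (j : 'I_n),
    K n v -> S != set0 -> j \notin S ->
    (forall i, i \in S -> index i (arrival pi) < index j (arrival pi))%N ->
    forall i, i \in S ->
      pay phi v S (restr pi S) i <= pay phi v (j |: S) (restr pi (j |: S)) i.

(* A predetermined tie-breaking rule: selects one option among the set of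
   maximizing options (set0 encodes "form a new singleton coalition"). *)
Definition tiebreak :=
  forall n : nat, game n -> {perm 'I_n} -> {set {set 'I_n}} -> {set 'I_n}.

Definition valid_tiebreak (tb : tiebreak) : Prop :=
  forall n (v : game n) (pi : {perm 'I_n}) (M : {set {set 'I_n}}),
    M != set0 -> tb n v pi M \in M.

(* Utility a player maximizes: phi (greedy) or bar phi (pessimistic). *)
Definition utility (phi : policy) (pess : bool) (n : nat) (v : game n)
  (pi : {perm 'I_n}) (S : {set 'I_n}) (i : 'I_n) : R :=
  if pess then pay phi v S (restr pi S) i else share phi v S (restr pi S) i.

Definition gstep (phi : policy) (pess : bool) (tb : tiebreak) (n : nat)
  (v : game n) (pi : {perm 'I_n}) (C : {set {set 'I_n}}) (p : 'I_n)
  : {set {set 'I_n}} :=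
  let opts := set0 |: C in
  let val := fun S : {set 'I_n} => utility phi pess v pi (p |: S) p in
  let M := [set S in opts | [forall S' in opts, val S' <= val S]] in
  let S := tb n v pi M in
  (C :\ S) :|: [set p |: S].

Definition gstruct (phi : policy) (pess : bool) (tb : tiebreak) (n : nat)
  (v : game n) (pi : {perm 'I_n}) (k : nat) : {set {set 'I_n}} :=
  foldl (gstep phi pess tb v pi) set0 (take k (arrival pi)).

Definition indiv_rational (phi : policy) (pess : bool) (tb : tiebreak)
  (K : gclass) : Prop :=
  forall n (v : game n) (pi : {perm 'I_n}) (k : nat) (S : {set 'I_n}) (i : 'I_n),
    K n v -> (k <= n)%N -> S \in gstruct phi pess tb v pi k -> i \in S ->
    v [set i] <= share phi v S (restr pi S) i.

Definition SW (n : nat) (C : {set {set 'I_n}}) (v : game n) : R :=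
  \sum_(S in C) v S.

Definition OPT (n : nat) (v : game n) : R :=
  \big[Num.max/0]_(P : {set {set 'I_n}} | partition P [set: 'I_n]) SW P v.

Definition ratio (phi : policy) (pess : bool) (tb : tiebreak) (n : nat)
  (v : game n) (pi : {perm 'I_n}) : R :=
  SW (gstruct phi pess tb v pi n) v / OPT v.

Definition comp_ratio (phi : policy) (pess : bool) (tb : tiebreak)
  (K : gclass) : R :=
  inf [set r : R | exists n (v : game n) (pi : {perm 'I_n}),
        [/\ (0 < n)%N, K n v & r = ratio phi pess tb v pi]].

End OnlineCoalitions.

(* A pair coalition {x, y} with v {x, y} < v {x} + v {y} can never form under
   an individually rational, non-wasteful policy: its two members would each
   have to receive at least their singleton value.  On the game on three players
   worth [max] for the grand coalition and [min] for every other nonempty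
   coalition, every pair is such a coalition, so greedy players can only ever
   create singletons (a triple must grow out of a pair).  The greedy welfare is
   therefore at most 3 min while the optimum is at least max.  Neither the
   irrevocability of payments nor the kind of greedy behaviour plays a role. *)
From Pilot Require Import Defs.
From mathcomp Require Import boolp classical_sets reals.
From mathcomp Require Import all_boot all_order all_algebra all_fingroup.
From mathcomp Require Import lra.

Set Implicit Arguments.
Unset Strict Implicit.
Unset Printing Implicit Defensive.

Import Order.TTheory GRing.Theory Num.Theory.
Local Open Scope ring_scope.

(* The hypothesis [0 <= c] covers sets without lower bound, whose [inf] is [0]. *)
Lemma inf_le_nonneg (R : realType) (E : set R) (x c : R) :
  E x -> x <= c -> 0 <= c -> inf E <= c.
Proof.
move=> Ex xc c0; have [lbE|nlbE] := pselect (has_lbound E).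
  exact: le_trans (ge_inf lbE Ex) xc.
by rewrite inf_out // => -[_].
Qed.

Section GreedyProcess.
Variables (R : realType) (phi : policy R) (pess : bool) (tb : tiebreak R).
Variables (n : nat) (v : game R n) (pi : {perm 'I_n}).
Hypothesis tbP : valid_tiebreak tb.

Lemma gstepP (C : {set {set 'I_n}}) (p : 'I_n) :
  exists2 S, S \in set0 |: C & gstep phi pess tb v pi C p = (C :\ S) :|: [set p |: S].
Proof.
rewrite /gstep; set opts := set0 |: C.
set val := fun S : {set 'I_n} => utility phi pess v pi (p |: S) p.
set M := [set S in opts | _].
have opts0 : set0 \in opts by rewrite !inE eqxx.
have /(tbP v pi) : M != set0.
  have [S optsS Smax] := @arg_maxP _ R _ set0 (mem opts) val opts0.
  by apply/set0Pn; exists S; rewrite inE; apply/andP; split => //; apply/forall_inP.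
by rewrite inE => /andP[optsS _]; exists (tb v pi M).
Qed.

Lemma gstruct0 : gstruct phi pess tb v pi 0 = set0.
Proof. by rewrite /gstruct take0. Qed.

Lemma gstructS (k : nat) : (k < n)%N ->
  exists p, gstruct phi pess tb v pi k.+1 = gstep phi pess tb v pi (gstruct phi pess tb v pi k) p.
Proof.
move=> kn; have size_arrival : size (arrival pi) = n by rewrite size_map size_enum_ord.
exists (nth (Ordinal kn) (arrival pi) k).
by rewrite /gstruct (take_nth (Ordinal kn)) ?size_arrival // foldl_rcons.
Qed.

(* Joining a singleton {x} creates either {x} again or a pair, so the
   invariant does not even need the arrivals to be distinct. *)
Lemma gstruct_singletons :
  (forall k (x y : 'I_n), (k <= n)%N -> x != y ->
     [set x; y] \notin gstruct phi pess tb v pi k) ->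
  forall k, (k <= n)%N -> forall X, X \in gstruct phi pess tb v pi k -> exists x, X = [set x].
Proof.
move=> no_pair; elim=> [|k IHk] kn X; first by rewrite gstruct0 inE.
have /IHk {}IHk := ltnW kn; have [p CSk] := gstructS kn.
have [S CS CkS] := gstepP (gstruct phi pess tb v pi k) p.
have pS_in : p |: S \in gstruct phi pess tb v pi k.+1 by rewrite CSk CkS !inE eqxx orbT.
rewrite CSk CkS !inE => /orP[/andP[_ /IHk[x ->]]|/eqP->]; first by exists x.
move: CS; rewrite !inE => /orP[/eqP->|/IHk[x Sx]]; first by exists p; rewrite setU0.
have [px|px] := eqVneq p x; first by exists x; rewrite Sx px setUid.
by exfalso; move: pS_in; rewrite Sx; apply/negP; exact: no_pair.
Qed.

End GreedyProcess.

Lemma pair_never_forms (R : realType) (phi : policy R) (pess : bool)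
  (tb : tiebreak R) (K : gclass R) (n : nat) (v : game R n) (pi : {perm 'I_n})
  (k : nat) (x y : 'I_n) :
  non_wasteful phi K -> indiv_rational phi pess tb K -> K n v -> (k <= n)%N ->
  x != y -> v [set x; y] < v [set x] + v [set y] ->
  [set x; y] \notin gstruct phi pess tb v pi k.
Proof.
move=> nw ir Kv kn xy subadd; apply/negP => xy_in.
have xIR := ir n v pi k _ x Kv kn xy_in (set21 x y).
have yIR := ir n v pi k _ y Kv kn xy_in (set22 x y).
have /(nw n v pi _ Kv) : [set x; y] != set0 by apply/set0Pn; exists x; exact: set21.
rewrite big_setU1 ?inE //= big_set1; lra.
Qed.

Lemma SW_singletons_le (R : realType) (n : nat) (v : game R n)
  (C : {set {set 'I_n}}) (c : R) :
  0 <= c -> (forall x, v [set x] <= c) -> (forall X, X \in C -> exists x, X = [set x]) ->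
  SW C v <= n%:R * c.
Proof.
move=> c0 vc Csing; apply: (@le_trans _ _ (\sum_(X in C) c)).
  by apply: ler_sum => X /Csing[x ->].
rewrite sumr_const [leRHS]mulr_natl; apply: (ler_wpMn2l c0).
have /subset_leq_card : C \subset [set [set x] | x : 'I_n].
  by apply/subsetP => X /Csing[x ->]; apply/imsetP; exists x.
by move/leq_trans; apply; rewrite (leq_trans (leq_imset_card _ _)) // card_ord.
Qed.

Lemma grand_le_OPT (R : realType) (n : nat) (v : game R n) :
  (0 < n)%N -> v setT <= OPT v.
Proof.
move=> n0; have T0 : [set: 'I_n] != set0 by apply/set0Pn; exists (Ordinal n0).
have part : partition [set [set: 'I_n]] [set: 'I_n].
  by rewrite /partition cover1 eqxx trivIset1 inE eq_sym.
by apply: le_trans (le_bigmax_cond _ (fun P => SW P v) part); rewrite /SW big_set1.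
Qed.

Lemma ratio_le (R : realType) (phi : policy R) (pess : bool) (tb : tiebreak R)
  (n : nat) (v : game R n) (pi : {perm 'I_n}) (a b : R) :
  0 <= a -> 0 < b -> SW (gstruct phi pess tb v pi n) v <= a -> b <= OPT v ->
  Defs.ratio phi pess tb v pi <= a / b.
Proof.
move=> a0 b0 SWa bOPT; have OPT0 := lt_le_trans b0 bOPT.
rewrite /Defs.ratio (@le_trans _ _ (a / OPT v)) //; first by rewrite ler_pM2r ?invr_gt0.
by rewrite ler_wpM2l // lef_pV2 ?posrE.
Qed.

Section GrandGame.
Variables (R : realType) (mn mx : R) (n : nat).

Definition grand_game : game R n :=
  fun S => if S == set0 then 0 else if S == setT then mx else mn.

Lemma grand_game_small (S : {set 'I_n}) :
  S != set0 -> (#|S| < n)%N -> grand_game S = mn.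
Proof.
move=> /negbTE S0 Sn; rewrite /grand_game S0 ifF //.
by apply: contraTF Sn => /eqP->; rewrite cardsT card_ord ltnn.
Qed.

Lemma grand_game_in_V_ge3 : 0 < mn -> 3%:R * mn <= mx -> V_ge3 mn mx grand_game.
Proof.
move=> mn0 mn3; have mnmx : mn <= mx by lra.
have q0 : 0 <= mx / mn by rewrite divr_ge0 ?ltW //; lra.
exists (Num.truncn (mx / mn)); split; last split; last split.
- by rewrite truncn_ge_nat // ler_pdivlMr.
- split=> [|S T S0 ST]; first by rewrite /grand_game eqxx.
  have T0 : T != set0 by apply: contraNneq S0 => T0; rewrite -subset0 -T0.
  rewrite /grand_game (negbTE S0) (negbTE T0).
  case: ifPn => [/eqP ST'|_]; last by case: ifP.
  by move: ST; rewrite ST' subTset => ->.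
- by rewrite -ler_pdivlMr // truncn_le.
- by rewrite -ltr_pdivrMr // truncnS_gt.
Qed.

End GrandGame.

Theorem theorem7 (R : realType) (mn mx : R) (phi : policy R)
  (tb : tiebreak R) (pess : bool) :
  0 < mn -> mn <= mx -> 3%:R * mn <= mx ->
  non_wasteful phi (V_ge3 mn mx) ->
  irrevocable_pay phi (V_ge3 mn mx) ->
  valid_tiebreak tb ->
  indiv_rational phi pess tb (V_ge3 mn mx) ->
  comp_ratio phi pess tb (V_ge3 mn mx) <= 3%:R * mn / mx.
Proof.
move=> mn0 mnmx mn3 nw _ tbP ir.
pose v := grand_game mn mx (n := 3); pose pi : {perm 'I_3} := 1%g.
have Kv : V_ge3 mn mx v := grand_game_in_V_ge3 3 mn0 mn3.
have v1 (x : 'I_3) : v [set x] = mn by rewrite /v grand_game_small -?card_gt0 ?cards1.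
have no_pair k (x y : 'I_3) : (k <= 3)%N -> x != y -> [set x; y] \notin gstruct phi pess tb v pi k.
  move=> k3 xy; apply: (pair_never_forms pi nw ir Kv k3 xy).
  have -> : v [set x; y] = mn by rewrite /v grand_game_small -?card_gt0 ?cards2 // !ltnS leq_b1.
  by rewrite !v1; lra.
have SW3 : SW (gstruct phi pess tb v pi 3) v <= 3%:R * mn.
  apply: SW_singletons_le (gstruct_singletons tbP no_pair (leqnn 3)) => [|x].
    exact: ltW.
  by rewrite v1.
have OPTmx : mx <= OPT v.
  have vT : v setT = mx by rewrite /v /grand_game eqxx ifF // -cards_eq0 cardsT card_ord.
  by rewrite -vT grand_le_OPT.
have mx0 : 0 < mx by lra.
have bound0 : 0 <= 3%:R * mn by rewrite mulr_ge0 ?ltW.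
apply: (@inf_le_nonneg _ _ (Defs.ratio phi pess tb v pi)); first by exists 3%N, v, pi.
  exact: ratio_le bound0 mx0 SW3 OPTmx.
exact: divr_ge0 bound0 (ltW mx0).
Qed.
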